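(* Let $n\ge 3$ and for $p>0$ define $$\|M_{S_n}\|_p^{*}:=\sup_{y\ge 1}\left(\frac{y^p+(n-1)\left(\frac{1+y}{2}\right)^p}{y^p+(n-1)}\right)^{1/p}.$$ Then $$\lim_{p\to\infty}\left(\|M_{S_n}\|_p^{*}\right)^p=\frac{1+\sqrt{n}}{2}.$$ *)

From HB Require Import structures.
From mathcomp Require Import all_boot all_order all_algebra.
From mathcomp Require Import all_classical all_reals all_analysis.
Set Implicit Arguments. Unset Strict Implicit. Unset Printing Implicit Defensive.
Import Order.TTheory GRing.Theory Num.Theory.
Import numFieldNormedType.Exports.
Local Open Scope classical_set_scope.
Local Open Scope ring_scope.

Definition MSn_norm_star (R : realType) (n : nat) (p : R) : R :=
  sup [set ((y `^ p + (n%:R - 1) * ((1 + y) / 2) `^ p) / (y `^ p + (n%:R - 1))) `^ p^-1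
      | y in [set y : R | 1 <= y]].

From HB Require Import structures.
From mathcomp Require Import all_boot all_order all_algebra.
From mathcomp Require Import all_classical all_reals all_analysis.
From mathcomp Require Import ring lra.
Import Order.TTheory GRing.Theory Num.Theory.
Import numFieldNormedType.Exports.
Local Open Scope classical_set_scope.
Local Open Scope ring_scope.

(* Let m = n - 1, let F_p(y) be the ratio inside the supremum, and let
   L = (1 + sqrt n) / 2, the root of 4 L (L - 1) = m; the quantity in the
   theorem is sup_{y >= 1} F_p(y).  Put a = y^(p/2).  Since (1 + y) / 2 >= sqrt y,
   F_p(y) >= (a^2 + m a) / (a^2 + m), a ratio whose maximum over a is L, attained
   at a = 2 L; hence the supremum is at least L for every p > 0.  Conversely, for
   1 <= y <= 1 + 16 L / p the midpoint (1 + y) / 2 is at most sqrt y exp (32 L^2 / p^2),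
   so F_p(y) <= exp (32 L^2 / p) L by the same bound on the ratio, while for larger y
   the midpoint term is at most exp (-4 L) y^p, which is small enough to give
   F_p(y) <= L. *)

Section midpoint_powR.
Context {R : realType}.
Implicit Types (p x y d K : R).

Lemma ln_le_subr1 x : 0 < x -> ln x <= x - 1.
Proof. by move=> x0; rewrite -[x in ln x](subrKC 1) le_ln1Dx //; lra. Qed.

Lemma powR_half_sqr p y : 0 <= y -> y `^ (p / 2) ^+ 2 = y `^ p.
Proof. by move=> y0; rewrite -powR_mulrn ?powR_ge0 // -powRrM divfK. Qed.

Lemma sqrt_le_midpoint y : 0 <= y -> Num.sqrt y <= (1 + y) / 2.
Proof.
move=> y0; have := sqr_ge0 (Num.sqrt y - 1).
by rewrite sqrrB1 sqr_sqrtr //; lra.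
Qed.

Lemma powR_half_le_midpoint p y : 0 <= p -> 0 <= y ->
  y `^ (p / 2) <= ((1 + y) / 2) `^ p.
Proof.
move=> p0 y0; rewrite mulrC powRrM powR12_sqrt //.
by apply: ge0_ler_powR; rewrite ?nnegrE ?sqrtr_ge0 ?sqrt_le_midpoint //; lra.
Qed.

Lemma midpoint_powR_le_near1 p y d : 0 <= p -> 1 <= y -> y <= 1 + d ->
  ((1 + y) / 2) `^ p <= expR (p * d ^+ 2 / 8) * y `^ (p / 2).
Proof.
move=> p0 y1 yd.
have y0 : 0 < y by lra.
have z0 : 0 < (1 + y) / 2 by lra.
rewrite -ler_ln ?posrE ?mulr_gt0 ?expR_gt0 ?powR_gt0 //.
rewrite lnM ?posrE ?expR_gt0 ?powR_gt0 // expRK !ln_powR.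
have gap : 2 * ln ((1 + y) / 2) - ln y <= d ^+ 2 / 4.
  have -> : 2 * ln ((1 + y) / 2) - ln y = ln (((1 + y) / 2) ^+ 2 / y).
    set z := (1 + y) / 2 in z0 *.
    by rewrite lnM ?lnV ?lnXn ?posrE ?invr_gt0 ?exprn_gt0 // mulr2n; ring.
  apply: le_trans (ln_le_subr1 _ _) _; first by rewrite divr_gt0 ?exprn_gt0.
  have -> : ((1 + y) / 2) ^+ 2 / y - 1 = (y - 1) ^+ 2 / (4 * y) by field; rewrite gt_eqF.
  rewrite ler_pdivrMr; last lra.
  have : (y - 1) ^+ 2 <= d ^+ 2 by rewrite ler_sqr ?nnegrE; lra.
  have := sqr_ge0 d; nra.
nra.
Qed.

Lemma midpoint_powR_le_far p y K : 0 < p -> 1 <= y -> K <= p -> K <= p * (y - 1) ->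
  ((1 + y) / 2) `^ p <= expR (- (K / 4)) * y `^ p.
Proof.
move=> p0 y1 Kp Ky.
have y0 : 0 < y by lra.
have z0 : 0 < (1 + y) / 2 by lra.
rewrite -ler_ln ?posrE ?mulr_gt0 ?expR_gt0 ?powR_gt0 //.
rewrite lnM ?posrE ?expR_gt0 ?powR_gt0 // expRK !ln_powR.
have gap : ln ((1 + y) / 2) - ln y <= (1 - y) / (2 * y).
  rewrite -lnV ?posrE // -lnM ?posrE ?invr_gt0 //.
  have -> : (1 - y) / (2 * y) = (1 + y) / 2 / y - 1 by field; rewrite gt_eqF.
  by rewrite ln_le_subr1 // divr_gt0.
(* 2 p (y - 1) - K y = (p (y - 1) - K) + (p - K) (y - 1) >= 0 *)
have : p * ((1 - y) / (2 * y)) <= - (K / 4) by rewrite mulrA ler_pdivrMr; nra.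
nra.
Qed.

End midpoint_powR.

Definition MSn_ratio {R : realType} (m p y : R) : R :=
  (y `^ p + m * ((1 + y) / 2) `^ p) / (y `^ p + m).

Section MSn_ratio_bounds.
Context {R : realType}.
Implicit Types L m p y a : R.

Lemma MSn_ratio_ge0 m p y : 0 <= m -> 0 <= MSn_ratio m p y.
Proof. by move=> m0; rewrite divr_ge0 ?addr_ge0 ?mulr_ge0 ?powR_ge0. Qed.

Lemma quadratic_ratio_le L m a : 1 < L -> 4 * L * (L - 1) = m ->
  a ^+ 2 + m * a <= L * (a ^+ 2 + m).
Proof.
move=> L1 mL; have : 0 <= (2 * (L - 1) * a - m) ^+ 2 := sqr_ge0 _.
have -> : (2 * (L - 1) * a - m) ^+ 2 =
          4 * (L - 1) * (L * (a ^+ 2 + m) - (a ^+ 2 + m * a)) by rewrite -mL; ring.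
by rewrite pmulr_rge0 ?subr_ge0 //; lra.
Qed.

Lemma MSn_ratio_ge_root L m p : 1 < L -> 4 * L * (L - 1) = m -> 0 < p ->
  L <= MSn_ratio m p ((2 * L) `^ (2 / p)).
Proof.
move=> L1 mL p0; set y := _ `^ _.
have y0 : 0 <= y := powR_ge0 _ _.
have a_eq : y `^ (p / 2) = 2 * L.
  rewrite -powRrM (_ : 2 / p * (p / 2) = 1) ?powRr1 //; first lra.
  by field; rewrite gt_eqF.
have := powR_half_le_midpoint p y (ltW p0) y0.
rewrite /MSn_ratio -(powR_half_sqr p y y0) a_eq ler_pdivlMr; last nra.
have m0 : 0 < m by rewrite -mL !mulr_gt0 ?subr_gt0 //; lra.
move=> z_ge; have : m * (2 * L) <= m * ((1 + y) / 2) `^ p by rewrite ler_pM2l.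
have : L * m = L * (4 * L * (L - 1)) by rewrite mL.
nra.
Qed.

Lemma MSn_ratio_le L m p y : 1 < L -> 4 * L * (L - 1) = m -> 16 * L <= p -> 1 <= y ->
  MSn_ratio m p y <= expR (32 * L ^+ 2 / p) * L.
Proof.
move=> L1 mL Lp y1.
have p0 : 0 < p by lra.
have m0 : 0 < m by rewrite -mL !mulr_gt0 ?subr_gt0 //; lra.
set c := expR _; have c1 : 1 <= c.
  by apply: le_trans _ (expR_ge1Dx _); rewrite lerDl divr_ge0 ?(ltW p0) //; nra.
rewrite /MSn_ratio ler_pdivrMr ?ltr_wpDl ?powR_ge0 //.
have [near1 | far] := lerP y (1 + 16 * L / p).
- have y0 : 0 <= y by lra.
  have := midpoint_powR_le_near1 p y (16 * L / p) (ltW p0) y1 near1.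
  rewrite (_ : p * (16 * L / p) ^+ 2 / 8 = 32 * L ^+ 2 / p) -/c; last first.
    by field; rewrite gt_eqF.
  rewrite -(powR_half_sqr p y y0); set a := y `^ (p / 2); set z := _ `^ p => z_le.
  have c0 : 0 < c := expR_gt0 _.
  have : m * z <= m * (c * a) by rewrite ler_pM2l.
  have : c * (a ^+ 2 + m * a) <= c * (L * (a ^+ 2 + m)).
    by rewrite ler_pM2l // quadratic_ratio_le.
  have : a ^+ 2 <= c * a ^+ 2 by rewrite ler_peMl ?sqr_ge0.
  lra.
- have far' : 16 * L <= p * (y - 1) by rewrite [p * _]mulrC -ler_pdivrMr //; lra.
  have := midpoint_powR_le_far p y (16 * L) p0 y1 Lp far'.
  rewrite (_ : 16 * L / 4 = 4 * L); last by field.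
  set e := expR _; set b := y `^ p; set z := _ `^ p => z_le.
  have b0 : 0 <= b := powR_ge0 _ _.
  have me : m * e <= L - 1.
    rewrite /e expRN -mL ler_pdivrMr ?expR_gt0 //.
    have := expR_ge1Dx (4 * L); nra.
  have : m * z <= m * (e * b) by rewrite ler_pM2l.
  have : m * e * b <= (L - 1) * b by rewrite ler_wpM2r.
  have : L * (b + m) <= c * (L * (b + m)) by rewrite ler_peMl //; nra.
  have : 0 <= L * m by rewrite mulr_ge0 // ltW //; lra.
  lra.
Qed.

End MSn_ratio_bounds.

Section powR_sup.
Context {R : realType} {T : Type}.
Implicit Types (A : set T) (f : T -> R) (p x V : R).

Lemma powRVK p x : 0 < p -> 0 <= x -> (x `^ p^-1) `^ p = x.
Proof. by move=> p0 x0; rewrite -powRrM mulVf ?gt_eqF // powRr1. Qed.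

Lemma ubound_powRV_image {A f V} p : 0 < p -> (forall t, A t -> 0 <= f t <= V) ->
  ubound [set f t `^ p^-1 | t in A] (V `^ p^-1).
Proof.
move=> p0 fA _ [t At <-]; have /andP[ft0 ftV] := fA t At.
by apply: ge0_ler_powR; rewrite // ?nnegrE ?invr_ge0 ?(ltW p0) // (le_trans ft0).
Qed.

Lemma le_powR_sup {A f V} p t0 : 0 < p -> (forall t, A t -> 0 <= f t <= V) -> A t0 ->
  f t0 <= sup [set f t `^ p^-1 | t in A] `^ p.
Proof.
move=> p0 fA At0; have /andP[ft0 _] := fA t0 At0.
have ft0_le : f t0 `^ p^-1 <= sup [set f t `^ p^-1 | t in A].
  by apply: ub_le_sup; [exists (V `^ p^-1); exact: ubound_powRV_image | exists t0].
rewrite -{1}(powRVK p (f t0) p0 ft0).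
apply: ge0_ler_powR; rewrite ?nnegrE ?powR_ge0 ?(ltW p0) //.
exact: le_trans (powR_ge0 _ _) ft0_le.
Qed.

Lemma powR_sup_le {A f V} p : 0 < p -> A !=set0 -> (forall t, A t -> 0 <= f t <= V) ->
  sup [set f t `^ p^-1 | t in A] `^ p <= V.
Proof.
move=> p0 [t0 At0] fA.
have V0 : 0 <= V by have /andP[] := fA t0 At0; exact: le_trans.
rewrite -[leRHS](powRVK p V p0 V0).
apply: ge0_ler_powR; rewrite ?nnegrE ?powR_ge0 ?(ltW p0) //.
- apply: le_trans (powR_ge0 (f t0) p^-1) _.
  by apply: ub_le_sup; [exists (V `^ p^-1); exact: ubound_powRV_image | exists t0].
- apply: ge_sup; first by exists (f t0 `^ p^-1), t0.
  exact: ubound_powRV_image.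
Qed.

End powR_sup.

Lemma cvgy_expR_div {R : realType} (c : R) : expR (c / x) @[x --> +oo] --> (1 : R).
Proof.
rewrite -expR0; apply: continuous_cvg; first exact: continuous_expR.
rewrite -(mulr0 c); apply: cvgM; first exact: cvg_cst.
apply/gtr0_cvgV0; last exact: cvg_id.
by near=> x; near: x; apply: nbhs_pinfty_gt.
Unshelve. all: by end_near.
Qed.

Theorem lemma3p5 (R : realType) (n : nat) (hn : (3 <= n)%N) :
  (fun p : R => MSn_norm_star n p `^ p) @ +oo --> (1 + Num.sqrt (n%:R : R)) / 2.
Proof.
set s : R := Num.sqrt _; set L : R := (1 + s) / 2; set m : R := n%:R - 1.
have n1 : 1 < n%:R :> R by rewrite ltr1n (leq_trans _ hn).
have s1 : 1 < s by rewrite -[X in X < _]sqrtr1 ltr_sqrt //; lra.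
have mL : 4 * L * (L - 1) = m.
  by rewrite /L /m -[n%:R](@sqr_sqrtr _ n%:R) ?ler0n // -/s; field.
have L1 : 1 < L by rewrite /L; lra.
apply: (@squeeze_cvgr _ _ _ _ (cst L) (fun p => expR (32 * L ^+ 2 / p) * L)).
- near=> p.
  have Lp : 16 * L <= p by near: p; apply: nbhs_pinfty_ge; rewrite num_real.
  have p0 : 0 < p by lra.
  have bounds y : 1 <= y -> 0 <= MSn_ratio m p y <= expR (32 * L ^+ 2 / p) * L.
    by move=> y1; rewrite MSn_ratio_ge0 ?MSn_ratio_le //; rewrite /m subr_ge0 ltW.
  apply/andP; split.
  + have y0_ge1 : 1 <= (2 * L) `^ (2 / p).
      by rewrite -[leLHS](powRr0 (2 * L)); apply: ler_powR; rewrite ?divr_ge0 ?ltW //; lra.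
    exact: le_trans (MSn_ratio_ge_root L m p L1 mL p0) (le_powR_sup p _ p0 bounds y0_ge1).
  + have ge1_nonempty : [set y : R | 1 <= y] !=set0 by exists 1 => /=.
    exact: powR_sup_le p p0 ge1_nonempty bounds.
- exact: cvg_cst.
- by rewrite -[X in _ --> X]mul1r; apply: cvgM; [exact: cvgy_expR_div | exact: cvg_cst].
Unshelve. all: by end_near.
Qed.
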